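(* Let $X$ be a nonempty set, let $(Y,\|\cdot,\cdot\|)$ be a linear $2$-normed space of dimension $d$ with $2\le d<\infty$, and let $\mathcal I\subset 2^{\mathbb N}$ be an admissible ideal. Let $f,f_n:X\to Y$ ($n\in\mathbb N$). If $\{f_n\}$ is $\mathcal I^*$-equal convergent to $f$, then $\{f_n\}$ is $\mathcal I$-equal convergent to $f$.
   Context: A $2$-norm on a real vector space $Y$ of dimension $d$, $2\le d<\infty$, is a function $\|\cdot,\cdot\|:Y\times Y\to\mathbb R$ such that: $\|x,y\|=0$ iff $x,y$ are linearly dependent; $\|x,y\|=\|y,x\|$; $\|\alpha x,y\|=|\alpha|\,\|x,y\|$ for $\alpha\in\mathbb R$; $\|x+y,z\|\le\|x,z\|+\|y,z\|$. An ideal $\mathcal I\subset 2^{\mathbb N}$ is a family closed under finite unions and subsets; it is admissible if it is proper ($\mathbb N\notin\mathcal I$) and contains all singletons. $\mathcal F(\mathcal I)=\{A\subset\mathbb N:\mathbb N\setminus A\in\mathcal I\}$. A real sequence $\{a_n\}$ is $\mathcal I$-convergent to $a$ ($\mathcal I\text{-}\lim a_n=a$) if for every $\varepsilon>0$, $\{n:|a_n-a|\ge\varepsilon\}\in\mathcal I$. $\{f_n\}$ is $\mathcal I$-equal convergent to $f$ if there is a sequence $\{\varepsilon_n\}$ of positive reals with $\mathcal I\text{-}\lim\varepsilon_n=0$ such that for every $x\in X$ and every $z\in Y$, $\{n\in\mathbb N:\|f_n(x)-f(x),z\|\ge\varepsilon_n\}\in\mathcal I$. $\{f_n\}$ is $\mathcal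 I^*$-equal convergent to $f$ if there exist a set $M=\{m_1<m_2<\cdots\}\in\mathcal F(\mathcal I)$ and a sequence $\{\varepsilon_k\}$ of positive reals with $\lim_{k\to\infty}\varepsilon_k=0$ such that for every $x\in X$ there is $p\in\mathbb N$ with $\|f_{m_k}(x)-f(x),z\|<\varepsilon_k$ for all $k\ge p$ and all $z\in Y$. *)

From HB Require Import structures.
From mathcomp Require Import all_boot all_order all_algebra.
From mathcomp Require Import reals.
Set Implicit Arguments. Unset Strict Implicit. Unset Printing Implicit Defensive.
Import Order.TTheory GRing.Theory Num.Theory.
Local Open Scope ring_scope.

Definition lin_dep (R : realType) (Y : vectType R) (x y : Y) : Prop :=
  ~~ free [:: x; y].

Definition is_2norm (R : realType) (Y : vectType R) (nrm : Y -> Y -> R) : Prop :=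
  [/\ (forall x y, nrm x y = 0 <-> lin_dep x y),
      (forall x y, nrm x y = nrm y x),
      (forall (a : R) x y, nrm (a *: x) y = `|a| * nrm x y)
    & (forall x y z, nrm (x + y) z <= nrm x z + nrm y z)].

Definition is_ideal (I : (nat -> Prop) -> Prop) : Prop :=
  (forall A B : nat -> Prop, I A -> I B -> I (fun n => A n \/ B n)) /\
  (forall A B : nat -> Prop, (forall n, B n -> A n) -> I A -> I B).

Definition admissible (I : (nat -> Prop) -> Prop) : Prop :=
  [/\ is_ideal I, ~ I (fun _ => True) & forall k : nat, I (fun n => n = k)].

Definition filterF (I : (nat -> Prop) -> Prop) (A : nat -> Prop) : Prop :=
  I (fun n => ~ A n).

Definition I_lim (R : realType) (I : (nat -> Prop) -> Prop) (a : nat -> R) (l : R)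
  : Prop :=
  forall eps : R, 0 < eps -> I (fun n => eps <= `|a n - l|).

Definition seq_lim (R : realType) (a : nat -> R) (l : R) : Prop :=
  forall eps : R, 0 < eps -> exists N, forall k, (N <= k)%N -> `|a k - l| < eps.

Definition I_equal_conv (R : realType) (Y : vectType R) (nrm : Y -> Y -> R)
  (X : Type) (I : (nat -> Prop) -> Prop) (fn : nat -> X -> Y) (f : X -> Y) : Prop :=
  exists eps : nat -> R,
    [/\ (forall n, 0 < eps n), I_lim I eps 0 &
        forall (x : X) (z : Y), I (fun n => eps n <= nrm (fn n x - f x) z)].

(* M = {m 0 < m 1 < ...} in F(I), given by a strictly increasing enumeration m *)
Definition Istar_equal_conv (R : realType) (Y : vectType R) (nrm : Y -> Y -> R)
  (X : Type) (I : (nat -> Prop) -> Prop) (fn : nat -> X -> Y) (f : X -> Y) : Prop :=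
  exists m : nat -> nat,
    (forall k, (m k < m k.+1)%N) /\
    filterF I (fun n => exists k, m k = n) /\
    exists eps : nat -> R,
      [/\ (forall k, 0 < eps k), seq_lim eps 0 &
          forall x : X, exists p : nat, forall k, (p <= k)%N ->
            forall z : Y, nrm (fn (m k) x - f x) z < eps k].

(** The set M = {m_0 < m_1 < ...} belongs to F(I), so every set meeting M in
    only finitely many points lies in the ideal: it is covered by N \ M and a
    finite initial segment, both in I.  Transport the sequence eps of the
    I*-definition to all of N as eps o g, for a left inverse g of m; the sets
    {n : r <= eps (g n)} and {n : eps (g n) <= ||f_n x - f x, z||} then meet M
    in finitely many points. *)

From HB Require Import structures.
From mathcomp Require Import all_boot all_order all_algebra.
From mathcomp Require Import reals.
From mathcomp Require Import boolp.
Set Implicit Arguments. Unset Strict Implicit. Unset Printing Implicit Defensive.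
Import Order.TTheory GRing.Theory Num.Theory.
Local Open Scope ring_scope.

Section StrictlyIncreasingSequence.

Variable m : nat -> nat.
Hypothesis m_incr : forall k, (m k < m k.+1)%N.

Lemma leq_mono_incr : {mono m : i j / (i <= j)%N}.
Proof. exact/leq_mono/(homo_ltn ltn_trans). Qed.

Lemma ltn_mono_incr : {mono m : i j / (i < j)%N}.
Proof. exact/leqW_mono/leq_mono_incr. Qed.

Lemma leq_incr_id n : (n <= m n)%N.
Proof. by elim: n => // n IHn; apply: leq_ltn_trans IHn (m_incr n). Qed.

Definition incr_inv (n : nat) : nat :=
  ex_minn (ex_intro (fun j => n <= m j)%N n (leq_incr_id n)).

Lemma incr_invK : cancel m incr_inv.
Proof.
move=> k; rewrite /incr_inv; case: ex_minnP => j; rewrite leq_mono_incr => le_kj.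
by move=> /(_ k (leqnn _)) le_jk; apply/eqP; rewrite eqn_leq le_jk le_kj.
Qed.

End StrictlyIncreasingSequence.

Section AdmissibleIdeal.

Variable I : (nat -> Prop) -> Prop.
Hypothesis HI : admissible I.

Lemma admissible_sub (A B : nat -> Prop) : I A -> (forall n, B n -> A n) -> I B.
Proof. by case: HI => [[_ subI] _ _] IA BA; apply: subI BA IA. Qed.

Lemma admissible_or (A B : nat -> Prop) : I A -> I B -> I (fun n => A n \/ B n).
Proof. by case: HI => [[orI _] _ _]; apply: orI. Qed.

Lemma admissible_ltn N : I (fun n => (n < N)%N).
Proof.
have [_ _ singleI] := HI; elim: N => [|N IHN].
  by apply: (admissible_sub (singleI 0%N)).
apply: (admissible_sub (admissible_or IHN (singleI N))) => n.
by rewrite ltnS leq_eqVlt => /orP[/eqP ->|]; [right | left].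
Qed.

Variable m : nat -> nat.
Hypothesis m_incr : forall k, (m k < m k.+1)%N.
Hypothesis m_filter : filterF I (fun n => exists k, m k = n).

Lemma admissible_subseq_eventually_not (P : nat -> Prop) N :
  (forall k, (N <= k)%N -> ~ P (m k)) -> I P.
Proof.
move=> notP; apply: (admissible_sub (admissible_or m_filter (admissible_ltn (m N)))).
move=> n Pn; case: (pselect (exists k, m k = n)) => [[k mk_n]|]; last by left.
right; rewrite -mk_n ltn_mono_incr // ltnNge; apply/negP => le_Nk.
by apply: (notP k le_Nk); rewrite mk_n.
Qed.

End AdmissibleIdeal.

Theorem mainTheorem5 (R : realType) (X : Type) (HX : inhabited X)
  (Y : vectType R) (d : nat) (Hdim : \dim (fullv : {vspace Y}) = d) (Hd : (2 <= d)%N)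
  (nrm : Y -> Y -> R) (Hnrm : is_2norm nrm)
  (I : (nat -> Prop) -> Prop) (HI : admissible I)
  (fn : nat -> X -> Y) (f : X -> Y) :
  Istar_equal_conv nrm I fn f -> I_equal_conv nrm I fn f.
Proof.
move=> [m [m_incr [m_filter [eps [eps_gt0 eps_lim eps_conv]]]]].
have eps_m k : eps (incr_inv m_incr (m k)) = eps k by rewrite incr_invK.
exists (fun n => eps (incr_inv m_incr n)); split => // [r r_gt0 | x z].
- have [N epsN] := eps_lim r r_gt0.
  apply: (admissible_subseq_eventually_not HI m_incr m_filter (N := N)) => k le_Nk.
  by rewrite eps_m; apply/negP; rewrite -ltNge; apply: epsN.
- have [p conv_p] := eps_conv x.
  apply: (admissible_subseq_eventually_not HI m_incr m_filter (N := p)) => k le_pk.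
  by rewrite eps_m; apply/negP; rewrite -ltNge; apply: conv_p.
Qed.
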